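(* Let $n\ge 6$ be even and consider the $[\![n,n-2,2]\!]$ code. Let $U$ be the product of the gates obtained from every tuple $(a,b,c)\in\{2,n\}\times\{3,n\}\times\{4,n\}$, namely $\mathrm{CCZ}_{a,b,c}$ when $a,b,c$ are distinct, $\mathrm{CZ}$ on the two distinct qubits when exactly two are distinct, and $Z_n$ for $(n,n,n)$; explicitly $U = Z_n\,\mathrm{CZ}_{2,n}\mathrm{CZ}_{3,n}\mathrm{CZ}_{4,n}\,\mathrm{CCZ}_{2,3,4}\mathrm{CCZ}_{2,3,n}\mathrm{CCZ}_{2,n,4}\mathrm{CCZ}_{n,3,4}$. Then $U$ preserves the code space and acts on it as the logical $\mathrm{CCZ}$ gate on encoded qubits $1,2,3$: $|\bar x\rangle\mapsto(-1)^{x_1x_2x_3}|\bar x\rangle$.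
   Context: For even $n$, the $[\![n,n-2,2]\!]$ code is the stabilizer code on $n$ qubits with stabilizer generators $X^{\otimes n}$ and $Z^{\otimes n}$, with logical operators $\bar X_j = X_1X_{j+1}$ and $\bar Z_j = Z_{j+1}Z_n$ for $j=1,\dots,n-2$. $|\bar x\rangle$ is the code state with $\bar Z_j|\bar x\rangle = (-1)^{x_j}|\bar x\rangle$. $\mathrm{CZ}=\mathbb 1-2|11\rangle\langle 11|$, $\mathrm{CCZ} = \mathbb 1 - 2|111\rangle\langle111|$. *)

(* Qubits are numbered 1..n as in the paper; qubit k is the ordinal k-1. *)
From HB Require Import structures.
From mathcomp Require Import all_boot all_order all_algebra all_field.
Set Implicit Arguments. Unset Strict Implicit. Unset Printing Implicit Defensive.
Import GRing.Theory Num.Theory.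
Local Open Scope ring_scope.

Definition sgn (c : bool) : algC := if c then -1 else 1.

Definition basis n := {ffun 'I_n -> bool}.
Definition state n := {ffun basis n -> algC}.

Definition bitq n (b : basis n) (k : nat) : bool :=
  [exists i : 'I_n, (i.+1 == k)%N && b i].

Definition scal n (c : algC) (psi : state n) : state n := [ffun b => c * psi b].

Definition diag n (f : basis n -> bool) (psi : state n) : state n :=
  [ffun b => sgn (f b) * psi b].

Definition Zg n (k : nat) := @diag n (fun b => bitq b k).
Definition CZg n (k l : nat) := @diag n (fun b => bitq b k && bitq b l).
Definition CCZg n (k l m : nat) :=
  @diag n (fun b => [&& bitq b k, bitq b l & bitq b m]).

Definition Xall n (psi : state n) : state n := [ffun b : basis n => psi [ffun i => ~~ b i]].
Definition Zall n := @diag n (fun b : basis n => odd (\sum_(i < n) (b i : nat))%N).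

Definition Zbar n (j : nat) := @diag n (fun b => bitq b j.+1 (+) bitq b n).

Definition codeSpace n (psi : state n) : Prop := Xall psi = psi /\ Zall psi = psi.

(* psi is (a multiple of) the code state |x_bar>, x = (x_1,...,x_{n-2}) *)
Definition logicalState n (x : nat -> bool) (psi : state n) : Prop :=
  codeSpace psi /\
  forall j, (1 <= j <= n - 2)%N -> @Zbar n j psi = scal (sgn (x j)) psi.

Definition Ugate n (psi : state n) : state n :=
  @Zg n n (@CZg n 2 n (@CZg n 3 n (@CZg n 4 n
    (@CCZg n 2 3 4 (@CCZg n 2 3 n (@CCZg n 2 n 4 (@CCZg n n 3 4 psi))))))).

(** Over GF(2) the phase of [U] on a basis string [b] expands to
    [(b2 + bn)(b3 + bn)(b4 + bn)]: the eight gates are exactly the monomials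
    of this product.  Each factor [b(j+1) + bn] is the eigenvalue bit of the
    logical [Z_j], so on the code space [U] multiplies by [(-1)^(x1 x2 x3)].
    The phase is invariant under flipping every bit, hence [U] commutes with
    [X^n]; being diagonal it commutes with [Z^n]. *)
From HB Require Import structures.
From mathcomp Require Import all_boot all_order all_algebra all_field.
Set Implicit Arguments.
Unset Strict Implicit.
Unset Printing Implicit Defensive.
Import GRing.Theory Num.Theory.
Local Open Scope ring_scope.

Lemma sgn_addb (a c : bool) : sgn a * sgn c = sgn (a (+) c).
Proof. by case: a; case: c; rewrite /sgn ?mulrNN ?mulr1 ?mul1r. Qed.

Lemma sgn_inj : injective sgn.
Proof.
have N1_neq1 : (-1 : algC) != 1.
  by rewrite -subr_eq0 -opprD oppr_eq0 -[1 + 1]/(2%:R) pnatr_eq0.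
by case=> [] [] // /eqP; rewrite /sgn ?(negPf N1_neq1) // eq_sym (negPf N1_neq1).
Qed.

Section DiagonalGates.

Variable n : nat.
Implicit Types (f g : basis n -> bool) (psi : state n) (b : basis n).

Definition flip b : basis n := [ffun i => ~~ b i].

Lemma eq_diag f g psi : f =1 g -> diag f psi = diag g psi.
Proof. by move=> fg; apply/ffunP => b; rewrite !ffunE fg. Qed.

Lemma diag_comp f g psi : diag f (diag g psi) = diag (fun b => f b (+) g b) psi.
Proof. by apply/ffunP => b; rewrite !ffunE mulrA sgn_addb. Qed.

Lemma diagC f g psi : diag f (diag g psi) = diag g (diag f psi).
Proof. by rewrite !diag_comp; apply: eq_diag => b; rewrite addbC. Qed.

Lemma Xall_diag f psi : Xall (diag f psi) = diag (f \o flip) (Xall psi).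
Proof. by apply/ffunP => b; rewrite !ffunE. Qed.

Lemma diag_codeSpace f psi :
  (forall b, f (flip b) = f b) -> codeSpace psi -> codeSpace (diag f psi).
Proof.
move=> f_flip [XP ZP]; split; last by rewrite /Zall diagC; congr (diag f _).
by rewrite Xall_diag XP; apply: eq_diag.
Qed.

Lemma diag_eigen_support f c psi b :
  diag f psi = scal (sgn c) psi -> psi b != 0 -> f b = c.
Proof.
by move=> /ffunP/(_ b); rewrite !ffunE => /[swap] /mulIf fP /fP /sgn_inj.
Qed.

Lemma diag_const_support f c psi :
  (forall b, psi b != 0 -> f b = c) -> diag f psi = scal (sgn c) psi.
Proof.
move=> fc; apply/ffunP => b; rewrite !ffunE.
by have [->|/fc ->] := eqVneq (psi b) 0; rewrite ?mulr0.
Qed.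

Lemma bitq_ord b (i : 'I_n) : bitq b i.+1 = b i.
Proof.
apply/existsP/idP => [[j /andP[/eqP/succn_inj ji]]|bi]; last by exists i; rewrite eqxx.
by rewrite (_ : j = i) //; apply: val_inj.
Qed.

Lemma bitq_flip b k : (0 < k <= n)%N -> bitq (flip b) k = ~~ bitq b k.
Proof. by case: k => // k kn; rewrite -[k]/(Ordinal kn : nat) !bitq_ord ffunE. Qed.

End DiagonalGates.

Definition Uphase n (b : basis n) : bool :=
  [&& bitq b 2 (+) bitq b n, bitq b 3 (+) bitq b n & bitq b 4 (+) bitq b n].

Lemma Ugate_phase n (psi : state n) : Ugate psi = diag (@Uphase n) psi.
Proof.
rewrite /Ugate /Zg /CZg /CCZg !diag_comp; apply: eq_diag => b; rewrite /Uphase.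
by case: (bitq b 2); case: (bitq b 3); case: (bitq b 4); case: (bitq b n).
Qed.

Lemma Uphase_flip n (b : basis n) : (4 <= n)%N -> Uphase (flip b) = Uphase b.
Proof.
move=> n4; rewrite /Uphase !bitq_flip; first by rewrite !addNb !addbN !negbK.
all: by rewrite /= ?leqnn ?andbT ?(leq_trans _ n4).
Qed.

Theorem mainTheorem6 (n : nat) (hn : (6 <= n)%N) (heven : ~~ odd n) :
  (forall psi : state n, codeSpace psi -> codeSpace (Ugate psi)) /\
  (forall (x : nat -> bool) (psi : state n), logicalState x psi ->
     Ugate psi = scal (sgn [&& x 1%N, x 2%N & x 3%N]) psi).
Proof.
(* [heven] only makes the code space nonzero ([X^n] and [Z^n] anticommute
   for odd [n]); the argument does not need it. *)
have n4 : (4 <= n)%N by apply: leq_trans hn.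
split=> [psi|x psi [_ ZbarP]]; rewrite Ugate_phase.
  by apply: diag_codeSpace => b; apply: Uphase_flip.
apply: diag_const_support => b psib.
have logical_bit j : (1 <= j <= 3)%N -> bitq b j.+1 (+) bitq b n = x j.
  move=> /andP[j1 j3]; apply: (diag_eigen_support (ZbarP j _) psib).
  by rewrite j1 (leq_trans j3) // leq_subRL // (leq_trans _ hn).
by rewrite /Uphase !logical_bit.
Qed.
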